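(* Let $I$ be an index set of non-measurable cardinality and $H$ the group $\mathbb Z^{(I)}$ with the topology of pointwise convergence on $\mathbb Z^I$. Let $\bar t\in\mathbb T^I$ and suppose there is an infinite set $J\subseteq I$ such that $\bar t(i)$ is irrational for every $i\in J$ and the set $\{\bar t(i):i\in J\}$ is linearly independent over $\mathbb Q$. Then $\bar t\notin\widehat H$.
   Context: $\mathbb Z^{(I)}$ is the group of finitely supported functions $I\to\mathbb Z$, paired with $\mathbb Z^I$ by $\langle\bar g,\bar x\rangle=\sum_i\bar g(i)\bar x(i)$; $H$ carries the weakest topology making all maps $\bar g\mapsto\langle\bar g,\bar x\rangle\in\mathbb Z$ ($\mathbb Z$ discrete) continuous. $\mathbb T=\mathbb R/\mathbb Z$ is identified with $(-1/2,1/2]$ with addition mod $1$, so elements of $\mathbb T$ are regarded as real numbers. An element $\bar t\in\mathbb T^I$ is identified with the homomorphism $H\to\mathbb T$, $\bar g\mapsto\sum_i\bar g(i)\bar t(i)$, and $\widehat H$ (continuous homomorphisms $H\to\mathbb T$) is thereby a subgroup of $\mathbb T^I$. *)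

From HB Require Import structures.
From mathcomp Require Import all_boot all_order all_algebra.
From mathcomp Require Import boolp classical_sets functions cardinality fsbigop reals.
Set Implicit Arguments. Unset Strict Implicit. Unset Printing Implicit Defensive.
Import Order.TTheory GRing.Theory Num.Theory.
Local Open Scope classical_set_scope.
Local Open Scope ring_scope.

(** Ulam-measurable cardinality: I carries a countably complete
    non-principal ultrafilter.  "Non-measurable cardinality" = not this. *)
Definition ulam_measurable (I : Type) : Prop :=
  exists U : set (set I),
    ~ U set0 /\
    (forall A B, U A -> A `<=` B -> U B) /\
    (forall A B, U A -> U B -> U (A `&` B)) /\
    (forall A, U A \/ U (~` A)) /\
    (forall F : nat -> set I, (forall n, U (F n)) -> U (\bigcap_n F n)) /\
    (forall i, ~ U [set i]).

Definition zsupp (I : Type) (g : I -> int) : set {classic I} :=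
  [set i | g i != 0].

Definition in_H (I : Type) (g : I -> int) : Prop := finite_set (zsupp g).

Definition pairing (I : Type) (g x : I -> int) : int :=
  \sum_(i \in zsupp g) (g i * x i).

(** The (real representative of the) value of the homomorphism
    attached to t in T^I at g: sum_i g(i) t(i), taken mod 1 below. *)
Definition char_val (R : realType) (I : Type) (t : I -> R) (g : I -> int) : R :=
  \sum_(i \in zsupp g) ((g i)%:~R * t i).

(** Distance in T = R/Z between the classes of a and b is < e. *)
Definition T_close (R : realType) (a b e : R) : Prop :=
  exists k : int, `|a - b - k%:~R| < e.

(** t (viewed as a homomorphism H -> T) is continuous when H carries the
    weakest topology making all g |-> <g,x> (x in Z^I, Z discrete)
    continuous: basic neighbourhoods of g0 are finite intersections
    of sets {g in H | <g,x> = <g0,x>}. *)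
Definition in_dual (R : realType) (I : Type) (t : I -> R) : Prop :=
  forall g0 : I -> int, in_H g0 ->
  forall e : R, 0 < e ->
  exists xs : seq (I -> int),
    forall g : I -> int, in_H g ->
      (forall x, x \in xs -> pairing g x = pairing g0 x) ->
      T_close (char_val t g) (char_val t g0) e.

(** T is identified with (-1/2, 1/2]. *)
Definition in_T (R : realType) (a : R) : Prop := - (2^-1) < a <= 2^-1.

Definition is_rational (R : realType) (a : R) : Prop := exists q : rat, a = ratr q.

Definition Q_lin_indep (R : realType) (I : Type) (t : I -> R) (J : set I) : Prop :=
  forall (s : seq {classic I}) (q : I -> rat),
    uniq s -> (forall i, i \in s -> J i) ->
    \sum_(i <- s) ratr (q i) * t i = 0 ->
    forall i, i \in s -> q i = 0.

(* If t were continuous on H, a basic neighbourhood of 0, i.e. the common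
   kernel K of finitely many pairings, would be mapped into (-1/4, 1/4) + Z.
   K is stable under multiplication by N, and some multiple of a non-integer
   lies at distance at least 1/4 from Z, so t takes integer values on K.
   Finitely many linear equations in infinitely many unknowns have nonzero
   integer solutions, so K contains nonzero g1, g2 supported in J with
   disjoint supports. If t(g1) = k1 and t(g2) = k2, then k2 g1 - k1 g2 is a
   nonzero element supported in J on which t vanishes, which contradicts the
   Q-linear independence of the t(i), i in J. *)

From HB Require Import structures.
From mathcomp Require Import all_boot all_order all_algebra.
From mathcomp Require Import boolp classical_sets functions cardinality fsbigop reals.
From mathcomp Require Import finmap lra zify.
Import Order.TTheory GRing.Theory Num.Theory.
Local Open Scope classical_set_scope.
Local Open Scope ring_scope.

Section MultiplesNearIntegers.
Variable R : archiRealFieldType.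

Lemma quarter_le_dist_int (y : R) (z : int) :
  4^-1 <= `|y| <= 4^-1 *+ 3 -> 4^-1 <= `|z%:~R + y|.
Proof.
move=> /andP[y_ge]; rewrite ler_norml => /andP[y_lo y_hi].
have [z_ge1|z_lt1] := lerP 1 z.
  have : 1 <= z%:~R :> R by rewrite ler1z.
  by rewrite ler_normr; lra.
have [z_leN1|z_gtN1] := lerP z (-1).
  have : z%:~R <= -1 :> R by rewrite -(mulrN1z 1) ler_int.
  by rewrite ler_normr; lra.
have -> : z = 0 by lia.
by rewrite add0r.
Qed.

Lemma exists_multiple_in_quarters (d : R) :
  0 < d <= 2^-1 -> exists N : nat, 4^-1 <= N%:R * d <= 4^-1 *+ 3.
Proof.
move=> /andP[d_gt0 d_le]; set n := Num.truncn (4 * d)^-1.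
have /andP[n_le n_gt] : n%:R <= (4 * d)^-1 < n.+1%:R.
  by rewrite truncn_itv // invr_ge0 mulr_ge0 // ltW.
have quarter : (4 * d)^-1 * d = 4^-1.
  by rewrite invfM -mulrA mulVf ?gt_eqF // mulr1.
have lo : (4 * d)^-1 * d < n.+1%:R * d by rewrite ltr_pM2r.
have hi : n%:R * d <= (4 * d)^-1 * d by rewrite ler_pM2r.
exists n.+1; rewrite quarter in lo hi.
by rewrite -[n.+1%:R]natr1 mulrDl mul1r in lo *; apply/andP; split; lra.
Qed.

Lemma int_of_near_int_multiples (a : R) :
  (forall N : nat, exists k : int, `|N%:R * a - k%:~R| < 4^-1) ->
  exists k : int, a = k%:~R.
Proof.
move=> near_int; set k0 := Num.floor (a + 2^-1).
have /andP[k0_le k0_gt] := floor_itv (a + 2^-1).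
rewrite -/k0 intrD in k0_le k0_gt.
set e := a - k0%:~R.
have [e0|e_neq0] := eqVneq e 0.
  by exists k0; apply/eqP; rewrite -subr_eq0 -/e e0.
have [N /andP[Ne_ge Ne_le]] : exists N : nat, 4^-1 <= N%:R * `|e| <= 4^-1 *+ 3.
  apply: exists_multiple_in_quarters; rewrite normr_gt0 e_neq0 ler_norml /=.
  by apply/andP; split; rewrite /e; lra.
have [k k_near] := near_int N.
have := @quarter_le_dist_int (N%:R * e) (N%:Z * k0 - k).
rewrite normrM normr_nat Ne_ge Ne_le => /(_ isT).
suff -> : (N%:Z * k0 - k)%:~R + N%:R * e = N%:R * a - k%:~R :> R by lra.
by rewrite /e intrB intrM mulrBr; lra.
Qed.

End MultiplesNearIntegers.

Section FinitelySupported.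
Context {I : Type}.
Implicit Types (g h : I -> int) (a b : int).

Lemma zsupp_add g h : zsupp (g \+ h) `<=` zsupp g `|` zsupp h.
Proof.
move=> i; rewrite /zsupp /=.
by have [->|gi _] := eqVneq (g i) 0; [rewrite add0r; right | left].
Qed.

Lemma zsupp_scale a g : zsupp (a \*o g) `<=` zsupp g.
Proof. by move=> i; rewrite /zsupp /= mulf_eq0 negb_or => /andP[]. Qed.

Lemma zsupp_lincomb a b g h :
  zsupp (a \*o g \+ b \*o h) `<=` zsupp g `|` zsupp h.
Proof. by move=> i /zsupp_add [] /zsupp_scale; [left | right]. Qed.

Lemma zsupp_lincomb_disjoint a {b g h} {J : set I} : b != 0 ->
  zsupp g `<=` J -> zsupp h `<=` J `\` zsupp g -> zsupp h !=set0 ->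
  zsupp (a \*o g \+ b \*o h) `<=` J /\ zsupp (a \*o g \+ b \*o h) !=set0.
Proof.
move=> b_neq0 gJ hJ [i hi]; split.
  apply: subset_trans (zsupp_lincomb _ _ _ _) _.
  by rewrite subUset; split=> // j /hJ [].
exists i; have [_ /negP/negPn/eqP gi0] := hJ i hi.
by rewrite /zsupp /= gi0 mulr0 add0r mulf_neq0.
Qed.

Lemma in_H0 : in_H (fun _ : I => 0 : int).
Proof. by apply: sub_finite_set (finite_set0 _) => i; rewrite /zsupp /=. Qed.

Lemma in_H_add g h : in_H g -> in_H h -> in_H (g \+ h).
Proof.
by move=> gH hH; apply: sub_finite_set (zsupp_add g h) _; rewrite finite_setU.
Qed.

Lemma in_H_scale a g : in_H g -> in_H (a \*o g).
Proof. exact/sub_finite_set/zsupp_scale. Qed.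

Lemma in_H_lincomb a b g h : in_H g -> in_H h -> in_H (a \*o g \+ b \*o h).
Proof. by move=> gH hH; apply: in_H_add; apply: in_H_scale. Qed.

Definition zpairing {V : pzRingType} g (x : I -> V) : V :=
  \sum_(i \in zsupp g) (g i)%:~R * x i.

Lemma pairingE g x : pairing g x = zpairing g x.
Proof. by apply: eq_fsbigr => i _; rewrite intz. Qed.

Section Zpairing.
Context {V : pzRingType} (x : I -> V).

Lemma zpairing0 : zpairing (fun _ : I => 0) x = 0.
Proof. by apply: fsbig1 => i _; rewrite mul0r. Qed.

Lemma zpairing_widen {g} {D : set {classic I}} :
  zsupp g `<=` D -> zpairing g x = \sum_(i \in D) (g i)%:~R * x i.
Proof.
move=> gD; apply: fsbig_widen => // i [_ /negP/negPn/eqP /= ->].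
by rewrite mul0r.
Qed.

Lemma zpairing_add g h : in_H g -> in_H h ->
  zpairing (g \+ h) x = zpairing g x + zpairing h x.
Proof.
move=> gH hH; have Dfin : finite_set (zsupp g `|` zsupp h) by rewrite finite_setU.
rewrite (zpairing_widen (zsupp_add g h)) (zpairing_widen (@subsetUl _ _ (zsupp h))).
rewrite (zpairing_widen (@subsetUr _ (zsupp g) _)) -fsbig_split //.
by apply: eq_fsbigr => i _; rewrite /= intrD mulrDl.
Qed.

Lemma zpairing_scale a g : in_H g -> zpairing (a \*o g) x = a%:~R * zpairing g x.
Proof.
move=> gH; rewrite (zpairing_widen (zsupp_scale a g)) /zpairing fsbig_distrr //.
by apply: eq_fsbigr => i _; rewrite /= intrM mulrA.
Qed.

Lemma zpairing_lincomb a b g h : in_H g -> in_H h ->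
  zpairing (a \*o g \+ b \*o h) x = a%:~R * zpairing g x + b%:~R * zpairing h x.
Proof.
by move=> gH hH; rewrite zpairing_add ?zpairing_scale //; apply: in_H_scale.
Qed.

End Zpairing.

Definition in_kernel (xs : seq (I -> int)) g : Prop :=
  forall x, x \in xs -> pairing g x = 0.

Lemma exists_in_kernel (xs : seq (I -> int)) {J : set I} : infinite_set J ->
  exists g, [/\ in_H g, zsupp g `<=` J, zsupp g !=set0 & in_kernel xs g].
Proof.
elim: xs J => [|y xs IH] J Jinf.
  have [j Jj] := infinite_setN0 Jinf.
  pose e i : int := (i == j :> {classic I}) : nat.
  have e_supp : zsupp e `<=` [set j].
    by move=> i; rewrite /zsupp /e /=; case: (i =P j).
  exists e; split=> //.
  - exact: sub_finite_set e_supp (finite_set1 _).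
  - by move=> i /e_supp ->.
  - by exists j; rewrite /zsupp /e /= eqxx.
have [g1 [g1H g1J g1_neq0 g1ker]] := IH J Jinf.
have [g2 [g2H g2J g2_neq0 g2ker]] := IH _ (infinite_setD Jinf g1H).
set a := pairing g1 y; set b := pairing g2 y.
have [a0|a_neq0] := eqVneq a 0.
  by exists g1; split=> // x; rewrite inE => /predU1P[->|/g1ker].
have Na_neq0 : - a != 0 by rewrite oppr_eq0.
have [gJ g_neq0] := zsupp_lincomb_disjoint b Na_neq0 g1J g2J g2_neq0.
exists (b \*o g1 \+ (- a) \*o g2); split=> //.
- exact: in_H_lincomb.
- move=> x; rewrite pairingE zpairing_lincomb // !intz -!pairingE.
  by rewrite inE => /predU1P[->|xs_x]; rewrite -/a -/b ?g1ker ?g2ker //; lia.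
Qed.

End FinitelySupported.

Section Characters.
Context {R : realType} {I : Type} {t : I -> R}.

Lemma char_valE g : char_val t g = zpairing g t.
Proof. by []. Qed.

Lemma in_dual_near0 {e} : in_dual t -> 0 < e -> exists xs : seq (I -> int),
  forall g, in_H g -> in_kernel xs g -> T_close (char_val t g) 0 e.
Proof.
move=> dual e_gt0; have [xs near] := dual _ in_H0 e e_gt0.
exists xs => g gH gker; rewrite -[0](zpairing0 t) -char_valE.
by apply: near => // x xs_x; rewrite gker // pairingE zpairing0.
Qed.

Lemma char_val_int_on_kernel {xs : seq (I -> int)} {g : I -> int} :
  (forall h, in_H h -> in_kernel xs h -> T_close (char_val t h) 0 4^-1) ->
  in_H g -> in_kernel xs g -> exists k : int, char_val t g = k%:~R.
Proof.
move=> near0 gH gker; apply: int_of_near_int_multiples => N.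
have Ngker : in_kernel xs (N%:Z \*o g).
  by move=> x /gker; rewrite !pairingE zpairing_scale // => ->; rewrite mulr0.
have [k] := near0 _ (in_H_scale _ _ gH) Ngker.
by rewrite !char_valE zpairing_scale // subr0 -pmulrn; exists k.
Qed.

Lemma char_val_neq0 {J : set I} {g : I -> int} : Q_lin_indep t J ->
  in_H g -> zsupp g `<=` J -> zsupp g !=set0 -> char_val t g != 0.
Proof.
move=> indep gH gJ [i gi]; apply/eqP => g_val0.
have in_suppE (j : {classic I}) : (j \in fset_set (zsupp g)) = (g j != 0).
  by rewrite in_fset_set // mem_setE.
have : (g i)%:Q = 0.
  apply: (indep (fset_set (zsupp g)) (fun j => (g j)%:Q)).
  - exact: fset_uniq.
  - by move=> j; rewrite in_suppE => /gJ.
  - rewrite -[RHS]g_val0 /char_val fsbig_finite //.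
    by apply: eq_bigr => j _; rewrite ratr_int.
  - by rewrite in_suppE.
by move/eqP; rewrite intr_eq0; apply/negP.
Qed.

End Characters.

Theorem lemma4p13 (R : realType) (I : Type) (t : I -> R) (J : set I) :
  ~ ulam_measurable I ->
  (forall i, in_T (t i)) ->
  infinite_set J ->
  (forall i, J i -> ~ is_rational (t i)) ->
  Q_lin_indep t J ->
  ~ in_dual t.
Proof.
move=> _ _ Jinf _ indep dual.
have quarter_gt0 : 0 < 4^-1 :> R by rewrite invr_gt0.
have [xs near0] := in_dual_near0 dual quarter_gt0.
have [g1 [g1H g1J g1_neq0 g1ker]] := exists_in_kernel xs Jinf.
have [g2 [g2H g2J g2_neq0 g2ker]] := exists_in_kernel xs (infinite_setD Jinf g1H).
have [k1 g1_val] := char_val_int_on_kernel near0 g1H g1ker.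
have [k2 g2_val] := char_val_int_on_kernel near0 g2H g2ker.
have k1_neq0 : k1 != 0.
  apply: contraNneq (char_val_neq0 indep g1H g1J g1_neq0) => k1_0.
  by rewrite g1_val k1_0.
have Nk1_neq0 : - k1 != 0 by rewrite oppr_eq0.
have [gJ g_neq0] := zsupp_lincomb_disjoint k2 Nk1_neq0 g1J g2J g2_neq0.
apply/negP: (char_val_neq0 indep (in_H_lincomb _ _ _ _ g1H g2H) gJ g_neq0).
rewrite char_valE zpairing_lincomb // -!char_valE g1_val g2_val.
by rewrite -!intrM -intrD mulNr mulrC subrr mulr0z eqxx.
Qed.
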